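(* Let $k\in\{1,\dots,n\}$ and let $R$ be a run of an $n$-DPDA, with $|R|\ge1$, that is not $(k-1)$-upper. Suppose that there exists an index $j\in\{0,\dots,|R|-1\}$ such that $R[j,|R|]$ is $k$-upper, and that for the greatest such index $j$ the run $R[0,j]$ is $(k-1)$-upper. Then $R$ is a $k$-return.
   Context: Stacks: fix order $n\ge1$, finite stack alphabet $\Gamma$. A $0$-stack is $(\gamma,x)$ with $\gamma\in\Gamma$, $x=(x_n,\dots,x_1)$ a vector of $n$ positive integers (position). For $k\in\{1,\dots,n\}$ a $k$-stack is a finite list $[s_1,\dots,s_m]$ ($m\ge0$) of nonempty $(k-1)$-stacks such that for some $x_n,\dots,x_{k+1}$, every position in $s_i$ has the form $(x_n,\dots,x_{k+1},i,y_{k-1},\dots,y_1)$. The top is at the right; $s^k:s^{k-1}$ appends at the top (right-associative); for $s^r=t^r:t^{r-1}:\dots:t^k$, $\mathrm{top}^k(s^r)=t^k$. Equality of stacks includes positions. For $k<n$, $\mathsf p_{+1}(s^k)$ adds $1$ to the $(n-k)$-th coordinate of all positions. Operations of order $k\ge1$: $\mathsf{pop}^k(s^r:\dots:s^k:s^{k-1})=s^r:\dots:s^k$, defined only if the topmost $k$-stack has at least two $(k-1)$-stacks; $\mathsf{push}^k_\gamma(s^r:\dots:s^0)=s^r:\dots:s^{k+1}:(s^k:\dots:s^0):\mathsf p_{+1}(s^{k-1}:\dots:s^1:(\gamma,x))$ where $s^0=(\gamma',x)$. An $n$-DPDA has transitions determined by state and topmost stack symbol, each either $\mathrm{read}(\vec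 q)$ ($\vec q:A\to Q$ injective; leads to $(\vec q(a),s)$, reading $a$) or $(q,op)$ with $op$ a stack operation of order $\le n$ (leads to $(q,op(s))$ if defined). Configurations are (state, nonempty $n$-stack). A run is a finite sequence $R=c_0,\dots,c_m$ with each $c_i$ a successor of $c_{i-1}$; $R(i)=c_i$, $|R|=m$, $R[i,j]=c_i,\dots,c_j$. $\mathrm{top}^k(c)$, $\mathsf{pop}^k(c)$ refer to the stack of $c$. History: for a run $R$ and a $0$-stack $s^0$ of $R(|R|)$, $\mathrm{hist}(R,s^0)$ is a $0$-stack of $R(0)$: if $|R|=0$ it is $s^0$; if $R=S\circ T$, $|T|=1$, and the last step is a read or a $\mathsf{pop}$, or a $\mathsf{push}^r_\gamma$ with $s^0$ not in the topmost $(r-1)$-stack of $R(|R|)$, it is $\mathrm{hist}(S,s^0)$; if the last step is $\mathsf{push}^r_\gamma$ and $s^0$ is in the topmost $(r-1)$-stack of $R(|R|)$, it is $\mathrm{hist}(S,t^0)$ with $t^0$ equal to $s^0$ with the $(n-r+1)$-th position coordinate decreased by $1$. For a $k$-stack $s^k$ of $R(|R|)$, $k\ge1$, $\mathrm{hist}(R,s^k)$ is the $k$-stack of $R(0)$ containing $\mathrm{hist}(R,s^0)$ for all $0$-stacks $s^0$ of $s^k$. For $k\in\{0,\dots,n\}$, $R$ is $k$-upper if $\mathrm{hist}(R,\mathrm{top}^k(R(|R|)))=\mathrm{top}^k(R(0))$. For $k\in\{1,\dots,n\}$, $R$ is a $k$-return if $\mathrm{hist}(R,\mathrm{top}^{k-1}(R(|R|)))=\mathrm{top}^{k-1}(\mathsf{pop}^k(R(0)))$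 and $R[i,|R|]$ is not $(k-1)$-upper for every $i\in\{0,\dots,|R|-1\}$. *)

From mathcomp Require Import all_boot.
From Stdlib Require List.
Set Implicit Arguments.
Unset Strict Implicit.
Unset Printing Implicit Defensive.

(* A stack over alphabet G: a 0-stack is [Leaf g x] with x = [:: x_n; ...; x_1]
   its position; a k-stack (k >= 1) is [Node l], l listed bottom-to-top
   (the top is the last element). The order is recorded by [wfk]. *)
Inductive stk (G : Type) : Type :=
| Leaf of G & seq nat
| Node of seq (stk G).
Arguments Leaf {G}.
Arguments Node {G}.

Inductive op (G : Type) : Type :=
| OPop of nat
| OPush of nat & G.
Arguments OPop {G}.
Arguments OPush {G}.

Inductive trans (Q A G : Type) : Type :=
| TRead of (A -> Q)
| TOp of Q & op G.
Arguments TRead {Q A G}.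
Arguments TOp {Q A G}.

Section HOPDA.
Variable n : nat.
Variable G : Type.

Notation stk := (stk G).
Definition dflt : stk := Node [::].

Definition children (s : stk) : seq stk :=
  match s with Node l => l | Leaf _ _ => [::] end.

Fixpoint pos (s : stk) : seq (seq nat) :=
  match s with
  | Leaf _ x => [:: x]
  | Node l => flatten (map pos l)
  end.

Definition nonempty (s : stk) : Prop :=
  match s with Leaf _ _ => True | Node l => l <> [::] end.

(* [wfk k s] : s is a k-stack (in the sense of the paper, for order n). *)
Fixpoint wfk (k : nat) (s : stk) : Prop :=
  match k, s with
  | 0, Leaf _ x => size x = n /\ all (fun y => 0 < y) x
  | k'.+1, Node l =>
      List.Forall (wfk k') l /\ List.Forall nonempty l /\
      exists p : seq nat, size p = n - k /\
        forall i, i < size l -> forall x, x \in pos (nth dflt l i) ->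
          take (n - k) x = p /\ nth 0 x (n - k) = i.+1
  | _, _ => False
  end.

Fixpoint topd (d : nat) (s : stk) : stk :=
  match d with 0 => s | d'.+1 => topd d' (last dflt (children s)) end.

Definition top (k : nat) (s : stk) : stk := topd (n - k) s.

(* all substacks at depth d; the k-stacks of an n-stack are [subd (n-k) s] *)
Fixpoint subd (d : nat) (s : stk) : seq stk :=
  match d with
  | 0 => [:: s]
  | d'.+1 => flatten (map (subd d') (children s))
  end.

Fixpoint atd (d : nat) (f : stk -> option stk) (s : stk) : option stk :=
  match d with
  | 0 => f s
  | d'.+1 =>
      match s with
      | Node l =>
          if l is [::] then None else
          match atd d' f (last dflt l) with
          | Some c => Some (Node (rcons (take (size l).-1 l) c))
          | None => None
          end
      | Leaf _ _ => None
      end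
  end.

(* p_{+1} acting on coordinate with 0-based index j (of x_n,...,x_1) *)
Fixpoint shift (j : nat) (s : stk) : stk :=
  match s with
  | Leaf g x => Leaf g (incr_nth x j)
  | Node l => Node (map (shift j) l)
  end.

Fixpoint settop (g : G) (s : stk) : stk :=
  match s with
  | Leaf _ x => Leaf g x
  | Node l =>
      Node ((fix ml (l : seq stk) : seq stk :=
               match l with
               | [::] => [::]
               | [:: x] => [:: settop g x]
               | x :: l' => x :: ml l'
               end) l)
  end.

Definition pop_top (s : stk) : option stk :=
  match s with
  | Node l => if 2 <= size l then Some (Node (take (size l).-1 l)) else None
  | Leaf _ _ => None
  end.

Definition push_top (j : nat) (g : G) (s : stk) : option stk :=
  match s with
  | Node l => if l is [::] then None
              else Some (Node (rcons l (shift j (settop g (last dflt l)))))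
  | Leaf _ _ => None
  end.

Definition pop (k : nat) (s : stk) : option stk :=
  if (1 <= k <= n) then atd (n - k) pop_top s else None.

Definition push (k : nat) (g : G) (s : stk) : option stk :=
  if (1 <= k <= n) then atd (n - k) (push_top (n - k) g) s else None.

Definition apply_op (o : op G) (s : stk) : option stk :=
  match o with OPop k => pop k s | OPush k g => push k g s end.

Definition topsym (s : stk) : option G :=
  match top 0 s with Leaf g _ => Some g | Node _ => None end.

Variables Q A : Type.
Variable delta : Q -> G -> trans Q A G.

Definition config := (Q * stk)%type.

Definition succ (c c' : config) : Prop :=
  exists g, topsym c.2 = Some g /\
  match delta c.1 g with
  | TRead f => exists a, c' = (f a, c.2)
  | TOp q o => exists s', apply_op o c.2 = Some s' /\ c' = (q, s')
  end.

Fixpoint steps (c : config) (l : seq config) : Prop :=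
  match l with [::] => True | c' :: l' => succ c c' /\ steps c' l' end.

(* a run R = c_0, ..., c_m (as the list [:: c_0; ...; c_m]); |R| = size R - 1;
   every configuration has a (nonempty) n-stack. *)
Definition is_run (R : seq config) : Prop :=
  match R with
  | [::] => False
  | c :: l => steps c l /\ List.Forall (fun c => wfk n c.2 /\ nonempty c.2) R
  end.

Definition decr (j : nat) (x : seq nat) : seq nat := set_nth 0 x j (nth 0 x j).-1.

(* history of the 0-stack at position x of c' through the step c -> c' *)
Definition step_back (c c' : config) (x : seq nat) : seq nat :=
  match topsym c.2 with
  | Some g =>
      match delta c.1 g with
      | TOp _ (OPush r _) =>
          if x \in pos (top (r - 1) c'.2) then decr (n - r) x else x
      | _ => x
      end
  | None => x
  end.

Fixpoint histrev (l : seq config) (x : seq nat) : seq nat :=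
  match l with
  | c' :: ((c :: _) as l') => histrev l' (step_back c c' x)
  | _ => x
  end.

(* hist(R, s^0) for the 0-stack at position x of R(|R|): a position of R(0) *)
Definition hist0 (R : seq config) (x : seq nat) : seq nat := histrev (rev R) x.

(* [hist_is R k t u] : hist(R, t) = u for a k-stack t of R(|R|), i.e. u is the
   k-stack of R(0) containing hist(R, s^0) for all 0-stacks s^0 of t. *)
Definition hist_is (R : seq config) (k : nat) (t u : stk) : Prop :=
  match R with
  | [::] => False
  | c0 :: _ => List.In u (subd (n - k) c0.2) /\
               forall x, x \in pos t -> hist0 R x \in pos u
  end.

Definition upper (k : nat) (R : seq config) : Prop :=
  match R with
  | [::] => False
  | c0 :: l => hist_is R k (top k (last c0 l).2) (top k c0.2)
  end.

Definition subrun (R : seq config) (i j : nat) : seq config :=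
  take (j - i).+1 (drop i R).

Definition kreturn (k : nat) (R : seq config) : Prop :=
  match R with
  | [::] => False
  | c0 :: l =>
      (exists p, pop k c0.2 = Some p /\
         hist_is R (k - 1) (top (k - 1) (last c0 l).2) (top (k - 1) p)) /\
      forall i, i < size R - 1 -> ~ upper (k - 1) (subrun R i (size R - 1))
  end.


End HOPDA.

(* The proof reduces everything to arithmetic on positions.  Write toppos(s) for the
   position of the topmost 0-stack of s.  The positions of top^r(s) are exactly those
   agreeing with toppos(s) on the first n - r coordinates (top_mem), and among those,
   toppos(s) has the greatest coordinate n - r (top_max).  Hence R[i,e] is k-upper iff
   the history in R(i) of toppos(R(e)) agrees with toppos(R(i)) on n - k coordinates
   (upper_iff).  One step of history is analysed for reads, pops and pushes
   (the step_back lemmas): it maps positions to positions, preserves agreement on prefixes and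
   the relation [within_one], and propagates maximality [maximal_at].

   Let m = |R|, X_i the history in R(i) of toppos(R(m)), and j the greatest start of a
   k-upper suffix.  If j + 1 < m, maximality propagates from R(m) back to R(j), so
   R[j,m] is even (k-1)-upper and, composed with R[0,j], so is R: impossible.  Hence
   j + 1 = m, the last step puts X_j directly below toppos(R(j)) at level k ([below]),
   and tracing back to R(0) puts X_0 directly below toppos(R(0)); this yields pop^k,
   the history condition of a k-return, and the failure of (k-1)-upper for every proper
   suffix (section Return). *)

From mathcomp Require Import all_boot.
From Stdlib Require List Classical.
From mathcomp Require Import zify.
From Stdlib Require Import Lia.
Set Implicit Arguments. Unset Strict Implicit. Unset Printing Implicit Defensive.

Definition agree (l : nat) (x y : seq nat) := forall i, i < l -> nth 0 x i = nth 0 y i.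

Lemma agree_take l x y : l <= size x -> l <= size y -> (take l x = take l y <-> agree l x y).
Proof.
move=> hx hy; split=> [e i hi|h].
  by rewrite -(nth_take 0 hi x) e nth_take.
apply: (@eq_from_nth _ 0); first by rewrite !size_takel.
move=> i; rewrite size_takel // => hi; rewrite !nth_take //; exact: h.
Qed.

Lemma agree_le l l' x y : l' <= l -> agree l x y -> agree l' x y.
Proof. by move=> hl h i hi; apply: h; apply: leq_trans hl. Qed.

Lemma agree_sym l x y : agree l x y -> agree l y x.
Proof. by move=> h i hi; rewrite h. Qed.

Lemma agree_trans l x y z : agree l x y -> agree l y z -> agree l x z.
Proof. by move=> h1 h2 i hi; rewrite h1 // h2. Qed.

Lemma agreeS l x y : agree l.+1 x y <-> agree l x y /\ nth 0 x l = nth 0 y l.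
Proof.
split=> [h|[h1 h2] i]; first by split; [apply: agree_le h|apply: h].
by rewrite ltnS leq_eqVlt => /orP[/eqP->|/h1].
Qed.

Lemma greatest_witness (P : nat -> Prop) m j0 : j0 < m -> P j0 ->
  exists j, [/\ j < m, P j & forall j', j < j' < m -> ~ P j'].
Proof.
move: {2}(m - j0) (leqnn (m - j0)) => d; elim: d j0 => [|d IH] j0 hd hj0 Pj0.
  by move: hd; rewrite leqn0 subn_eq0 leqNgt hj0.
have [[j' [/andP[h1 h2] Pj']]|no] := Classical_Prop.classic (exists j', j0 < j' < m /\ P j').
  apply: (IH j') => //; lia.
exists j0; split=> // j' hj' Pj'; apply: no; by exists j'.
Qed.

(* Geometry of well-formed stacks: children are indexed by a coordinate, so topmost
   substacks are described by agreement with the top position. *)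
Section Stacks.
Variable n : nat.
Variable G : Type.
Local Notation stk := (stk G).
Local Notation dflt := (dflt G).

Lemma mem_flatten_pos (l : seq stk) x :
  x \in flatten (map (@pos G) l) -> exists2 i, i < size l & x \in pos (nth dflt l i).
Proof.
elim: l => [|a l IH] //=; rewrite mem_cat => /orP[h|/IH[i hi hx]].
  by exists 0.
by exists i.+1.
Qed.

Lemma mem_flatten_nth (l : seq stk) i x : i < size l -> x \in pos (nth dflt l i) ->
  x \in flatten (map (@pos G) l).
Proof. elim: l i => [|a l IH] [|i] //= hi hx; rewrite mem_cat ?hx //. by rewrite (IH i) ?orbT. Qed.

Lemma In_nth (T : Type) (d : T) (l : seq T) i : i < size l -> List.In (nth d l i) l.
Proof. elim: l i => [|a l IH] [|i] //= hi; [by left | right; exact: IH]. Qed.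

Lemma Forall_nth (T : Type) (P : T -> Prop) (d : T) (l : seq T) i :
  List.Forall P l -> i < size l -> P (nth d l i).
Proof. move/List.Forall_forall => h hi; apply: h; exact: In_nth. Qed.

Lemma ne_size (l : seq stk) : nonempty (Node l) -> 0 < size l.
Proof. by case: l. Qed.

Lemma wf_pos k (s : stk) x : wfk n k s -> x \in pos s -> size x = n /\ all (fun y => 0 < y) x.
Proof.
elim: k s => [|k IH] [g y|l] //=.
  by move=> h; rewrite inE => /eqP->.
move=> [hF [hne _]] /mem_flatten_pos [i hi hx].
exact: (IH (nth dflt l i) (Forall_nth dflt hF hi) hx).
Qed.

Lemma size_of_pos (t : stk) x : wfk n n t -> x \in pos t -> size x = n.
Proof. by move=> h /(wf_pos h) []. Qed.

Lemma coord_gt0 (t : stk) x i : wfk n n t -> x \in pos t -> i < n -> 0 < nth 0 x i.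
Proof.
move=> h hx hi; have [e /allP a] := wf_pos h hx.
by apply: a; apply: mem_nth; rewrite e.
Qed.

Lemma wf_child k (l : seq stk) x : wfk n k.+1 (Node l) -> x \in pos (Node l) ->
  exists2 i, i < size l & x \in pos (nth dflt l i) /\ nth 0 x (n - k.+1) = i.+1.
Proof.
move=> [_ [_ [p [_ H]]]] /mem_flatten_pos [i hi hx].
exists i => //; split => //; by case: (H i hi x hx).
Qed.

Lemma wf_childE k (l : seq stk) x i : wfk n k.+1 (Node l) -> x \in pos (Node l) -> i < size l ->
  (x \in pos (nth dflt l i)) = (nth 0 x (n - k.+1) == i.+1).
Proof.
move=> hw hx hi; have [i' hi' [hx' e]] := wf_child hw hx.
apply/idP/eqP => [h|h].
  by move: hw => [_ [_ [p [_ H]]]]; case: (H i hi x h).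
by move: e; rewrite h => -[e]; rewrite e.
Qed.

Lemma wf_agree k (s : stk) x y : k <= n -> wfk n k s -> x \in pos s -> y \in pos s -> agree (n - k) x y.
Proof.
case: k s => [|k] [g z|l] //=.
  by move=> _ _; rewrite !inE => /eqP-> /eqP->.
move=> hk hw hx hy.
have [sx _] := @wf_pos k.+1 (Node l) x hw hx; have [sy _] := @wf_pos k.+1 (Node l) y hw hy.
move: hw => [_ [_ [p [_ H]]]].
move: hx hy => /mem_flatten_pos [i hi hx] /mem_flatten_pos [j hj hy].
case: (H i hi x hx) => e1 _; case: (H j hj y hy) => e2 _.
apply/agree_take; rewrite ?sx ?sy ?leq_subr //.
by rewrite e1 e2.
Qed.

Lemma topd_add a b (s : stk) : topd (a + b) s = topd b (topd a s).
Proof. by elim: a s => [|a IH] s //=. Qed.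

Lemma pos_last (s : stk) : {subset pos (last dflt (children s)) <= pos s}.
Proof.
case: s => [g x|l] /=; first by [].
case/lastP: l => [|l a] //= x; rewrite last_rcons => hx.
rewrite -cats1 map_cat flatten_cat mem_cat /= cats0 hx orbT //.
Qed.

Lemma pos_topd d (s : stk) : {subset pos (topd d s) <= pos s}.
Proof. elim: d s => [|d IH] s x //= /IH; exact: pos_last. Qed.

Lemma last_In (T : Type) (d : T) (l : seq T) : l <> [::] -> List.In (last d l) l.
Proof. move=> hl; rewrite -nth_last; apply: In_nth; by case: l hl. Qed.

Lemma wf_topd k d (s : stk) : d <= k -> wfk n k s -> nonempty s ->
  wfk n (k - d) (topd d s) /\ nonempty (topd d s).
Proof.
elim: d k s => [|d IH] k s; first by rewrite subn0.
case: k => [|k] //; case: s => [g x|l] //= hd [hF [hne _]] hl.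
have hin := last_In dflt hl.
move/List.Forall_forall: hF => /(_ _ hin) hw.
move/List.Forall_forall: hne => /(_ _ hin) hn.
by rewrite subSS; apply: IH.
Qed.

Lemma In_topd k d (s : stk) : d <= k -> wfk n k s -> nonempty s -> List.In (topd d s) (subd d s).
Proof.
elim: d k s => [|d IH] k s; first by left.
case: k => [|k] //; case: s => [g x|l] //= hd [hF [hne _]] hl.
have hin := last_In dflt hl.
move/List.Forall_forall: (hF) => /(_ _ hin) hw.
move/List.Forall_forall: (hne) => /(_ _ hin) hn.
have H := IH k _ hd hw hn; clear hw hn IH.
move: (last dflt l) hin H => t; elim: l {hF hne hl} => [|a l IHl] //= [<- h|h h'].
  by apply/List.in_app_iff; left.
by apply/List.in_app_iff; right; apply: IHl.
Qed.

Definition toppos (s : stk) : seq nat := nth [::] (pos (topd n s)) 0.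

Definition below k (x y : seq nat) :=
  agree (n - k) x y /\ (nth 0 x (n - k)).+1 = nth 0 y (n - k).

Lemma toppos_top (s : stk) : wfk n n s -> nonempty s -> toppos s \in pos (topd n s).
Proof.
move=> hw hn; have [] := wf_topd (leqnn n) hw hn; rewrite subnn.
by rewrite /toppos; case: (topd n s) => [g x|l] //= _ _; rewrite inE.
Qed.

Lemma topd_mem k d (s : stk) z x : k <= n -> d <= k -> wfk n k s -> nonempty s ->
  z \in pos (topd d s) ->
  (x \in pos (topd d s) <-> x \in pos s /\ agree (n - k + d) x z).
Proof.
elim: d k s z => [|d IH] k s z.
  move=> hk _ hw _ hz /=; rewrite addn0; split=> [hx|[]//]; split=> //.
  exact: wf_agree hk hw hx hz.
case: k => [|k] //; case: s => [g y|l] // hk hd hw hl hz.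
have hw0 := hw; move: hw => [hF [hne _]].
have hin := last_In dflt hl.
move/List.Forall_forall: (hF) => /(_ _ hin) hwl.
move/List.Forall_forall: (hne) => /(_ _ hin) hnl.
move: hz; rewrite /= => hz.
have hk' : k < n by [].
rewrite (IH k _ z) //; last by apply: ltnW.
have hzl : z \in pos (last dflt l) by apply: pos_topd hz.
have hzN : z \in pos (Node l) by [apply: (@pos_last (Node l))].
have hsl := ne_size hl.
have eS : n - k = (n - k.+1).+1 by rewrite subnSK.
have eA : n - k.+1 + d.+1 = n - k + d by rewrite eS addnS addSn.
rewrite eA.
split=> [[hx hp]|[hx hp]].
  split; first by apply: (@pos_last (Node l)).
  done.
split=> //.
have hp1 : agree (n - k) x z by apply: agree_le hp; apply: leq_addr.
move: hp1; rewrite eS => /agreeS [_ e].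
rewrite -nth_last in hzl *.
have hlt : (size l).-1 < size l by rewrite prednK.
have ez : nth 0 z (n - k.+1) = size l.
  by move: hzl; rewrite (wf_childE hw0 hzN hlt) prednK // => /eqP.
by rewrite (wf_childE hw0 hx hlt) prednK // e ez.
Qed.

Lemma top_mem r (s : stk) x : r <= n -> wfk n n s -> nonempty s ->
  (x \in pos (top n r s) <-> x \in pos s /\ agree (n - r) x (toppos s)).
Proof.
move=> hr hw hn; rewrite /top.
have := topd_mem x (leqnn n) (leq_subr r n) hw hn; rewrite subnn add0n; apply.
have e : topd n s = topd r (topd (n - r) s) by rewrite -topd_add subnK.
have := toppos_top hw hn; rewrite e; exact: pos_topd.
Qed.

Lemma toppos_pos (s : stk) : wfk n n s -> nonempty s -> toppos s \in pos s.
Proof. move=> hw hn; exact: pos_topd (toppos_top hw hn). Qed.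

Lemma top_children k (s : stk) : 1 <= k <= n -> wfk n n s -> nonempty s ->
  exists L, [/\ top n k s = Node L, 0 < size L, nth 0 (toppos s) (n - k) = size L &
    forall x i, x \in pos (Node L) -> i < size L ->
      (x \in pos (nth dflt L i)) = (nth 0 x (n - k) == i.+1)].
Proof.
move=> /andP [hk1 hk] hw hn.
have [hwt hnt] := wf_topd (leq_subr k n) hw hn; rewrite subKn // in hwt.
have htp : toppos s \in pos (topd k (topd (n - k) s)).
  by rewrite -topd_add subnK //; apply: toppos_top.
rewrite /top; case: (topd (n - k) s) hwt hnt htp => [g y|L] hwt hnt htp.
  by case: k hk1 hk hwt {htp}.
case: k hk1 hk hwt htp => [|k] // _ hk hwt htp.
have hsl := ne_size hnt; have hlt : (size L).-1 < size L by rewrite prednK.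
have htl : toppos s \in pos (nth dflt L (size L).-1).
  by move: htp => /= /pos_topd; rewrite nth_last.
have htN : toppos s \in pos (Node L) := mem_flatten_nth hlt htl.
exists L; split => //; last by move=> x i hx hi; apply: wf_childE.
by move: htl; rewrite (wf_childE hwt htN hlt) prednK // => /eqP.
Qed.

Lemma top_max r (s : stk) x : 1 <= r <= n -> wfk n n s -> nonempty s -> x \in pos s ->
  agree (n - r) x (toppos s) -> nth 0 x (n - r) <= nth 0 (toppos s) (n - r).
Proof.
move=> hr hw hn hx hp.
have [L [eL _ -> hchild]] := top_children hr hw hn.
have hxL : x \in pos (Node L) by rewrite -eL; apply/top_mem => //; case/andP: hr.
have [i hi] := mem_flatten_pos hxL.
by rewrite hchild // => /eqP ->.
Qed.

End Stacks.

(* The stack operations pop^r and push^r, seen on positions. *)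
Section Ops.
Variable n : nat.
Variable G : Type.
Local Notation stk := (stk G).
Local Notation dflt := (dflt G).

Fixpoint stk_ind_forall (P : stk -> Prop) (HL : forall g x, P (Leaf g x))
  (HN : forall l, List.Forall P l -> P (Node l)) (s : stk) : P s :=
  match s with
  | Leaf g x => HL g x
  | Node l => HN l ((fix F (l : seq stk) : List.Forall P l :=
       match l with
       | [::] => @List.Forall_nil _ P
       | a :: l' => @List.Forall_cons _ P a l' (stk_ind_forall HL HN a) (F l')
       end) l)
  end.

Lemma pos_shift j (s : stk) : pos (shift j s) = map (fun x => incr_nth x j) (pos s).
Proof.
elim/stk_ind_forall: s => [g x|l IH] //=.
elim: l IH => [|a l IHl] //= /List.Forall_cons_iff [Ha Hl].
by rewrite map_cat Ha IHl.
Qed.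

Lemma pos_settop g (s : stk) : pos (settop g s) = pos s.
Proof.
elim/stk_ind_forall: s => [g' x|l IH] //=.
elim: l IH => [|a l IHl] //= /List.Forall_cons_iff [Ha Hl].
case: l IHl Hl => [|b l] IHl Hl /=; first by rewrite Ha.
by rewrite IHl.
Qed.

Lemma last_shift j (c : seq stk) : last dflt (map (shift j) c) = shift j (last dflt c).
Proof. exact: (last_map (shift j) c dflt). Qed.

Lemma last_ne (T : Type) (x y : T) s : s <> [::] -> last x s = last y s.
Proof. by case: s. Qed.

Lemma last_settop g (s : stk) : last dflt (children (settop g s)) = settop g (last dflt (children s)).
Proof.
case: s => [g' x|l] //=.
elim: l => [|a l IHl] //=.
case: l IHl => [|b l] IHl //=.
rewrite (@last_ne _ a dflt); last by case: l {IHl}.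
by rewrite IHl.
Qed.

Lemma children_shift j (s : stk) : children (shift j s) = map (shift j) (children s).
Proof. by case: s. Qed.

Lemma topd_shift j d (s : stk) : topd d (shift j s) = shift j (topd d s).
Proof. elim: d s => [|d IH] s //=; by rewrite children_shift last_shift IH. Qed.

Lemma topd_settop g d (s : stk) : topd d (settop g s) = settop g (topd d s).
Proof. elim: d s => [|d IH] s //=; by rewrite last_settop IH. Qed.

Lemma pos_rcons (l : seq stk) a : pos (Node (rcons l a)) = pos (Node l) ++ pos a.
Proof. by rewrite /= -cats1 map_cat flatten_cat /= cats0. Qed.

Lemma atd_spec d f (s s' : stk) : atd d f s = Some s' ->
  exists B t', [/\ f (topd d s) = Some t', pos s = B ++ pos (topd d s),
                  pos s' = B ++ pos t' & topd d s' = t'].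
Proof.
elim: d s s' => [|d IH] s s' /=.
  by move=> h; exists [::], s'.
case: s => [g x|l] //.
case/lastP: l => [|l a] //.
have -> : (if rcons l a is [::] then None else
           match atd d f (last dflt (rcons l a)) with
           | Some c => Some (Node (rcons (take (size (rcons l a)).-1 (rcons l a)) c))
           | None => None end) =
          match atd d f a with
          | Some c => Some (Node (rcons l c))
          | None => None end.
  by rewrite last_rcons size_rcons -cats1 take_size_cat //; case: l.
case E: (atd d f a) => [c|] // [<-].
have [B [t' [h1 h2 h3 h4]]] := IH _ _ E.
exists (pos (Node l) ++ B), t'; rewrite /= last_rcons; split => //.
- by rewrite -/(pos (Node (rcons l a))) pos_rcons h2 catA.
- by rewrite -/(pos (Node (rcons l c))) pos_rcons h3 catA.
- by rewrite last_rcons.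
Qed.

Lemma atd_some k d f (s : stk) t : d <= k -> wfk n k s -> nonempty s ->
  f (topd d s) = Some t -> exists s', atd d f s = Some s'.
Proof.
elim: d k s => [|d IH] k s; first by move=> _ _ _ /= ->; exists t.
case: k => [|k] //; case: s => [g x|l] //= hd [hF [hne _]] hl hf.
have hin := last_In dflt hl.
move/List.Forall_forall: (hF) => /(_ _ hin) hw.
move/List.Forall_forall: (hne) => /(_ _ hin) hn.
have [c ->] := IH k _ hd hw hn hf.
by case: l hl {hF hne hin hw hn hf}; [|eexists].
Qed.

Lemma In_flatten (T U : Type) (f : T -> seq U) (l : seq T) y :
  List.In y (flatten (map f l)) <-> exists x, List.In x l /\ List.In y (f x).
Proof.
elim: l => [|a l IH] /=; first by split=> // [[x []]].
rewrite List.in_app_iff IH; split.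
  by case=> [h|[x [h1 h2]]]; [exists a; split; [left|]|exists x; split; [right|]].
by case=> x [[<-|h1] h2]; [left|right; exists x].
Qed.

Lemma In_subd_child d (s t c : stk) : List.In t (subd d s) -> List.In c (children t) ->
  List.In c (subd d.+1 s).
Proof.
elim: d s => [|d IH] s.
  case=> [<-|[]] hc /=; apply/In_flatten; exists c; split=> //; by left.
move=> /= /In_flatten [s1 [h1 h2]] hc; apply/In_flatten; exists s1; split=> //.
exact: IH h2 hc.
Qed.

Lemma subnB1 r : 1 <= r <= n -> n - (r - 1) = (n - r).+1.
Proof. by case/andP=> h1 h2; rewrite subnBA // addn1 subSn. Qed.

Lemma topd1 (s : stk) d : topd d.+1 s = topd 1 (topd d s).
Proof. by rewrite -addn1 topd_add. Qed.

Lemma pop_spec r (s s' : stk) : 1 <= r <= n -> pop n r s = Some s' ->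
  exists B l a, [/\ topd (n - r) s = Node (rcons l a), l <> [::],
     pos s = B ++ pos (Node l) ++ pos a, pos s' = B ++ pos (Node l) &
     topd (n - r) s' = Node l].
Proof.
move=> hr; rewrite /pop hr => /atd_spec [B [t' [h1 h2 h3 h4]]].
move: h1 h2; case: (topd (n - r) s) => [g x|L] //=.
case: (ltnP 1 (size L)) => hL //; case=> et h2; rewrite -et {et} in h3 h4.
case/lastP: L hL h2 h3 h4 => [|l a] // hL h2 h3 h4.
exists B, l, a; rewrite size_rcons /= -cats1 take_size_cat // in h3 h4 *.
split=> //.
- by case: l hL {h2 h3 h4}.
- by rewrite h2 -cats1 map_cat flatten_cat /= cats0.
Qed.

Lemma top_sub r (s : stk) : 1 <= r <= n -> top n (r - 1) s = topd 1 (topd (n - r) s).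
Proof. by move=> hr; rewrite /top subnB1 // topd1. Qed.

Section PopFacts.
Variables (r : nat) (s s' : stk).
Hypothesis hr : 1 <= r <= n.
Hypothesis hp : pop n r s = Some s'.
Hypotheses (hw : wfk n n s) (hn : nonempty s) (hw' : wfk n n s') (hn' : nonempty s').

Lemma pop_pos_sub x : x \in pos s' -> x \in pos s.
Proof.
have [B [l [a [e1 _ e2 e3 _]]]] := pop_spec hr hp.
by rewrite e3 e2 !mem_cat => /orP[->|->]; rewrite ?orbT.
Qed.

Lemma pop_pos_keep x : x \in pos s -> ~ agree (n - r).+1 x (toppos n s) -> x \in pos s'.
Proof.
have [B [l [a [e1 _ e2 e3 _]]]] := pop_spec hr hp.
rewrite e2 e3 !mem_cat => /orP[->//|/orP[->|ha]]; rewrite ?orbT // => hnp.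
exfalso; apply: hnp.
have hx : x \in pos (top n (r - 1) s) by rewrite top_sub // e1 /= last_rcons.
have hr1 : r - 1 <= n by case/andP: hr => _ h; apply: leq_trans (leq_subr 1 r) h.
have [_ hpx] := (top_mem x hr1 hw hn).1 hx.
by rewrite -subnB1.
Qed.

Lemma pop_toppos : below n r (toppos n s') (toppos n s).
Proof.
have [B [l [a [e1 hl e2 e3 e4]]]] := pop_spec hr hp.
case/andP: hr => hr1 hr2.
have [] := wf_topd (leq_subr r n) hw hn; rewrite subKn // e1 => hwt _.
have htp : toppos n s \in pos (topd n s) by apply: toppos_top.
have htp' : toppos n s' \in pos (topd n s') by apply: toppos_top.
have eT : forall u : stk, topd n u = topd r (topd (n - r) u) by move=> u; rewrite -topd_add subnK.
rewrite (eT s) e1 in htp; rewrite (eT s') e4 in htp'.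
have er : r = (r - 1).+1 by rewrite subn1 prednK.
move: hwt htp htp' (hr2); rewrite er; move: (r - 1) => r' hwt htp htp' hr2'.
move: htp htp' => /= /pos_topd; rewrite last_rcons => htp /pos_topd htp'.
have hsl : 0 < size l by apply: (@ne_size G l hl).
have ia : size l < size (rcons l a) by rewrite size_rcons.
have il : (size l).-1 < size (rcons l a) by rewrite size_rcons ltnS leq_pred.
have htpN : toppos n s \in pos (Node (rcons l a)).
  by rewrite pos_rcons mem_cat htp orbT.
have ha : toppos n s \in pos (nth dflt (rcons l a) (size l)) by rewrite nth_rcons ltnn eqxx.
have hl' : toppos n s' \in pos (nth dflt (rcons l a) (size l).-1).
  have hlt : (size l).-1 < size l by rewrite prednK.
  by rewrite nth_rcons hlt nth_last.
have htpN' : toppos n s' \in pos (Node (rcons l a)) by apply: mem_flatten_nth il hl'.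
split.
  exact: wf_agree hr2' hwt htpN' htpN.
move: ha hl'; rewrite (wf_childE hwt htpN ia) (wf_childE hwt htpN' il) => /eqP-> /eqP->.
by rewrite prednK.
Qed.

Lemma pop_pos_below x : x \in pos s' -> ~ agree (n - r).+1 x (toppos n s).
Proof.
move=> hx /agreeS [hp1 e].
have [hc1 hc2] := pop_toppos.
have := top_max hr hw' hn' hx (agree_trans hp1 (agree_sym hc1)).
by rewrite e -hc2 ltnn.
Qed.

End PopFacts.

Lemma pop_exists k (s : stk) y : 1 <= k <= n -> wfk n n s -> nonempty s ->
  y \in pos s -> below n k y (toppos n s) ->
  exists p, [/\ pop n k s = Some p, List.In (top n (k - 1) p) (subd (n - (k - 1)) s) &
     forall x, x \in pos s -> below n k x (toppos n s) -> x \in pos (top n (k - 1) p)].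
Proof.
move=> hk hw hn hy [hpy ey].
have hkn : k <= n by case/andP: hk.
have [L [eL hsl etp hchild]] := top_children hk hw hn.
have inL x : x \in pos s -> agree (n - k) x (toppos n s) -> x \in pos (Node L).
  by move=> hx hpx; rewrite -eL; apply/top_mem.
have [i hi] := mem_flatten_pos (inL y hy hpy); rewrite hchild ?inL // => /eqP ei.
have hL2 : 1 < size L by rewrite -etp -ey ei.
have [p hp] : exists p, atd (n - k) (@pop_top G) s = Some p.
  apply: (atd_some (k := n) (t := Node (take (size L).-1 L)) (leq_subr k n) hw hn).
  by rewrite -/(top n k s) eL /= hL2.
have [B [t' [h1 _ _ h4]]] := atd_spec hp.
rewrite -/(top n k s) eL /= hL2 in h1; case: h1 => h1; rewrite -h1 {h1} in h4.
have etop : top n (k - 1) p = nth dflt L (size L).-2.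
  rewrite top_sub // h4 /= -nth_last size_takel ?leq_pred //.
  by rewrite nth_take //; case: (size L) hL2 => [|[|m]].
exists p; split; first by rewrite /pop hk.
  have hIn := In_topd (leq_subr k n) hw hn; rewrite -/(top n k s) eL in hIn.
  rewrite etop subnB1 //; apply: (In_subd_child hIn); apply: In_nth.
  by case: (size L) hL2 => [|[|m]].
move=> x hx [hpx ex]; rewrite etop hchild ?inL //; last by case: (size L) hL2 => [|[|m]].
by apply/eqP; apply: succn_inj; rewrite ex etp; case: (size L) hL2 => [|[|m]].
Qed.

Lemma push_spec r g (s s' : stk) : 1 <= r <= n -> push n r g s = Some s' ->
  exists B l, [/\ topd (n - r) s = Node l, l <> [::], pos s = B ++ pos (Node l),
     pos s' = B ++ pos (Node l) ++ map (fun x => incr_nth x (n - r)) (pos (last dflt l)) &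
     topd (n - r) s' = Node (rcons l (shift (n - r) (settop g (last dflt l))))].
Proof.
move=> hr; rewrite /push hr => /atd_spec [B [t' [h1 h2 h3 h4]]].
move: h1 h2; case: (topd (n - r) s) => [gg x|L] //=.
case: L => [|a L] //; case=> et h2; rewrite -et {et} in h3 h4.
exists B, (a :: L); split=> //.
by rewrite h3 -[a :: rcons L _]/(rcons (a :: L) _) pos_rcons pos_shift pos_settop catA.
Qed.

Section PushFacts.
Variables (r : nat) (g : G) (s s' : stk).
Hypothesis hr : 1 <= r <= n.
Hypothesis hp : push n r g s = Some s'.
Hypotheses (hw : wfk n n s) (hn : nonempty s) (hw' : wfk n n s') (hn' : nonempty s').

Lemma last_mem l x : topd (n - r) s = Node l ->
  (x \in pos (last dflt l)) <-> (x \in pos s /\ agree (n - r).+1 x (toppos n s)).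
Proof.
move=> e.
have hr1 : r - 1 <= n by case/andP: hr => _ h; apply: leq_trans (leq_subr 1 r) h.
have := top_mem x hr1 hw hn.
by rewrite top_sub // e subnB1.
Qed.

Lemma push_pos_sub x : x \in pos s -> x \in pos s'.
Proof.
have [B [l [_ _ e2 e3 _]]] := push_spec hr hp.
by rewrite e2 e3 !mem_cat => /orP[->|->]; rewrite ?orbT.
Qed.

Lemma push_pos_copy x : x \in pos s -> agree (n - r).+1 x (toppos n s) -> incr_nth x (n - r) \in pos s'.
Proof.
have [B [l [e1 _ e2 e3 _]]] := push_spec hr hp.
move=> hx hpx; have hl : x \in pos (last dflt l) by apply/(last_mem _ e1).
by rewrite e3 !mem_cat (map_f (fun x => incr_nth x (n - r)) hl) ?orbT.
Qed.

Lemma push_posP x : x \in pos s' -> x \in pos s \/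
  exists2 y, y \in pos s /\ agree (n - r).+1 y (toppos n s) & x = incr_nth y (n - r).
Proof.
have [B [l [e1 _ e2 e3 _]]] := push_spec hr hp.
rewrite e3 !mem_cat => /orP[h|/orP[h|/mapP [y hy ->]]].
- by left; rewrite e2 mem_cat h.
- by left; rewrite e2 mem_cat h orbT.
- by right; exists y => //; apply/(last_mem _ e1).
Qed.

Lemma push_toppos : toppos n s' = incr_nth (toppos n s) (n - r).
Proof.
have [B [l [e1 hl e2 e3 e4]]] := push_spec hr hp.
case/andP: hr => hr1 hr2.
have eT : forall u : stk, topd n u = topd r (topd (n - r) u) by move=> u; rewrite -topd_add subnK.
have htp := toppos_top hw hn.
rewrite /toppos eT e4; rewrite eT e1 in htp; rewrite eT e1.
have er : r = (r - 1).+1 by rewrite subn1 prednK.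
move: htp; rewrite er; move: (r - 1) => r' /=.
rewrite last_rcons topd_shift topd_settop pos_shift pos_settop => htp.
by rewrite (nth_map [::]) //; case: (pos _) htp.
Qed.

End PushFacts.

End Ops.

(* One step of a run, and how its history map acts on positions. *)
Section Steps.
Variables (n : nat) (G Q A : Type) (delta : Q -> G -> trans Q A G).
Local Notation config := (config G Q).

Lemma nth_decr j (x : seq nat) i : nth 0 (decr j x) i = if i == j then (nth 0 x j).-1 else nth 0 x i.
Proof. by rewrite /decr nth_set_nth. Qed.

Lemma size_decr j (x : seq nat) : j < size x -> size (decr j x) = size x.
Proof. by move=> h; rewrite /decr size_set_nth; apply/maxn_idPr. Qed.

Lemma decr_incr j (x : seq nat) : j < size x -> decr j (incr_nth x j) = x.
Proof.
move=> h; have hs : size (incr_nth x j) = size x by rewrite size_incr_nth h.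
apply: (@eq_from_nth _ 0); first by rewrite size_decr hs.
move=> i _; rewrite nth_decr !nth_incr_nth; case: (eqVneq i j) => [->|ne].
  by rewrite eqxx.
by [].
Qed.

Lemma succ_view (c c' : config) : succ n delta c c' ->
  [\/ c'.2 = c.2 /\ (forall x, step_back n delta c c' x = x),
      exists r, [/\ 1 <= r <= n, pop n r c.2 = Some c'.2 & forall x, step_back n delta c c' x = x]
    | exists r g, [/\ 1 <= r <= n, push n r g c.2 = Some c'.2 &
         forall x, step_back n delta c c' x =
            if x \in pos (top n (r - 1) c'.2) then decr (n - r) x else x]].
Proof.
move=> [g [hg hd]]; rewrite /step_back hg.
case: (delta c.1 g) hd => [f|q o] hd.
  by case: hd => a ->; constructor 1.
case: hd => s' [ha ->] /=.
case: o ha => [r|r g'] /= ha.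
  constructor 2; exists r; move: ha; rewrite /pop; case: ifP => // hr ha; by split.
constructor 3; exists r, g'; move: ha; rewrite /push; case: ifP => // hr ha; by split.
Qed.

Section OneStep.
Variables (c c' : config).
Hypothesis hs : succ n delta c c'.
Hypotheses (hw : wfk n n c.2) (hn : nonempty c.2) (hw' : wfk n n c'.2) (hn' : nonempty c'.2).
Local Notation s := c.2.
Local Notation s' := c'.2.
Local Notation sb := (step_back n delta c c').

Lemma mem_top_push r g x : 1 <= r <= n -> push n r g s = Some s' -> x \in pos s' ->
  (x \in pos (top n (r - 1) s')) <-> agree (n - r).+1 x (incr_nth (toppos n s) (n - r)).
Proof.
move=> hr hp hx.
have hr1 : r - 1 <= n by case/andP: hr => _ h; apply: leq_trans (leq_subr 1 r) h.
have := top_mem x hr1 hw' hn'; rewrite subnB1 // (push_toppos hr hp hw hn) => h.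
split; first by case/h.
by move=> hp1; apply/h.
Qed.

Lemma step_back_pos x : x \in pos s' -> sb x \in pos s.
Proof.
case: (succ_view hs) => [[e h]|[r [hr hp h]]|[r [g [hr hp h]]]] hx; rewrite h.
- by rewrite -e.
- exact: (@pop_pos_sub n G r c.2 c'.2 hr hp x hx).
have hpc := mem_top_push hr hp hx.
case/andP: (hr) => hr1 hr2.
case: ifP => hc.
  have hpx := hpc.1 hc.
  case: (push_posP hr hp hw hn hx) => [hxs|[y [hy _] ->]].
    exfalso; move/agreeS: hpx => [hpx e].
    have hp0 : agree (n - r) x (toppos n s).
      move=> i hi; rewrite hpx // nth_incr_nth (_ : (n - r == i) = false) //.
      by apply/eqP=> ei; move: hi; rewrite ei ltnn.
    have := top_max hr hw hn hxs hp0.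
    by rewrite e nth_incr_nth eqxx add1n ltnn.
  have hsy : n - r < size y by rewrite (size_of_pos hw hy); lia.
  by rewrite decr_incr.
case: (push_posP hr hp hw hn hx) => [//|[y [hy hpy] ex]].
exfalso; move/negP: hc; apply; apply/hpc.
rewrite ex => i hi; rewrite !nth_incr_nth hpy //.
Qed.

Lemma step_back_agree l x y : l <= n -> x \in pos s' -> y \in pos s' -> agree l x y -> agree l (sb x) (sb y).
Proof.
move=> hl hx hy hxy.
case: (succ_view hs) => [[e h]|[r [hr hp h]]|[r [g [hr hp h]]]]; rewrite !h //.
have hcx := mem_top_push hr hp hx; have hcy := mem_top_push hr hp hy.
move=> i hi.
case: (ltnP (n - r) l) => hrl.
  have ec : (x \in pos (top n (r - 1) s')) = (y \in pos (top n (r - 1) s')).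
    apply/idP/idP => h1.
      by apply/hcy; apply: agree_trans (agree_le hrl (agree_sym hxy)) (hcx.1 h1).
    by apply/hcx; apply: agree_trans (agree_le hrl hxy) (hcy.1 h1).
  rewrite ec; case: ifP => _; last exact: hxy.
  rewrite !nth_decr; case: (eqVneq i (n - r)) => [ei|ne]; first by subst i; rewrite hxy.
  by rewrite hxy.
have hne : (i == n - r) = false by apply/eqP => ei; move: hi; rewrite ei ltnNge hrl.
have ag : forall z : seq nat, nth 0 (if z \in pos (top n (r - 1) s') then decr (n - r) z else z) i = nth 0 z i.
  by move=> z; case: ifP => _ //; rewrite nth_decr hne.
by rewrite !ag hxy.
Qed.

Definition within_one k (x y : seq nat) := agree (n - k) x y /\
  (nth 0 y (n - k) = nth 0 x (n - k) \/ nth 0 y (n - k) = (nth 0 x (n - k)).+1).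

Lemma step_back_within_one k x y : 1 <= k <= n -> x \in pos s' -> y \in pos s' -> within_one k x y -> within_one k (sb x) (sb y).
Proof.
move=> hk hx hy [hxy hnn].
split; first by apply: step_back_agree => //; exact: leq_subr.
case: (succ_view hs) => [[e h]|[r [hr hp h]]|[r [g [hr hp h]]]]; rewrite !h //.
have hcx := mem_top_push hr hp hx; have hcy := mem_top_push hr hp hy.
have htp' := push_toppos hr hp hw hn.
case: (eqVneq r k) => [erk|nrk].
  subst r.
  case: ifP => cy; case: ifP => cx; rewrite ?nth_decr ?eqxx.
  - left; have := hcx.1 cx; have := hcy.1 cy => /agreeS [_ ->] /agreeS [_ ->] //.
  - case: hnn => ey.
      exfalso; move/negP: cx; apply; apply/hcx; apply/agreeS; split.
        exact: agree_trans hxy (agree_le (leqnSn _) (hcy.1 cy)).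
      by rewrite -ey; case/agreeS: (hcy.1 cy).
    by left; rewrite ey.
  - exfalso; have hpx := hcx.1 cx; case: hnn => ey.
      move/negP: cy; apply; apply/hcy; apply/agreeS; split.
        exact: agree_trans (agree_sym hxy) (agree_le (leqnSn _) hpx).
      by rewrite ey; case/agreeS: hpx.
    have hpy : agree (n - k) y (toppos n s').
      rewrite htp'; exact: agree_trans (agree_sym hxy) (agree_le (leqnSn _) hpx).
    have := top_max hk hw' hn' hy hpy; rewrite ey htp'.
    by case/agreeS: hpx => _ <-; rewrite ltnn.
  - by [].
have hne : (n - k == n - r) = false.
  apply/eqP => e; move/eqP: nrk; apply; case/andP: hk => _ hk2; case/andP: hr => _ hr2.
  by rewrite -(subKn hk2) -(subKn hr2) e.
have ag : forall z : seq nat, nth 0 (if z \in pos (top n (r - 1) s') then decr (n - r) z else z) (n - k) = nth 0 z (n - k).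
  by move=> z; case: ifP => _ //; rewrite nth_decr hne.
by rewrite !ag.
Qed.

Definition maximal_at k (t : stk G) x := forall y, y \in pos t -> agree (n - k) y x ->
  nth 0 y (n - k) <= nth 0 x (n - k).

Lemma maximal_back_pop k r x : 1 <= k <= n -> 1 <= r <= n -> pop n r s = Some s' ->
  x \in pos s' -> maximal_at k s' x ->
  (~ agree (n - k) x (toppos n s') \/ ~ agree (n - k) x (toppos n s)) -> maximal_at k s x.
Proof.
move=> hk hr hp hx hm hdis y hy hyx; apply: hm => //.
apply: (@pop_pos_keep n G r c.2 c'.2 hr hp hw hn y hy) => hP.
case: (leqP r k) => rk.
  have hxt : agree (n - k) x (toppos n s).
    apply: agree_trans (agree_sym hyx) (agree_le _ hP); apply: leq_trans (leqnSn _); exact: leq_sub2l.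
  have [hc1 _] := pop_toppos hr hp hw hn hw' hn'.
  case: hdis => hd; apply: hd; last by [].
  apply: agree_trans hxt (agree_sym (agree_le _ hc1)); exact: leq_sub2l.
apply: (@pop_pos_below n G r c.2 c'.2 hr hp hw hn hw' hn' x hx).
apply: agree_trans (agree_le _ (agree_sym hyx)) hP.
by case/andP: hk => _ hk2; case/andP: hr => _ hr2; lia.
Qed.

(* Undoing a push^r on a position of the copied (r-1)-stack: the copy shifts coordinate
   n - r by one, so maximality at a level k < r transfers to the original. *)
Lemma maximal_back_push k r g x : 1 <= k <= n -> 1 <= r <= n -> push n r g s = Some s' ->
  x \in pos s' -> x \in pos (top n (r - 1) s') -> maximal_at k s' x ->
  (~ agree (n - k) x (toppos n s') \/ ~ agree (n - k) (decr (n - r) x) (toppos n s)) ->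
  maximal_at k s (decr (n - r) x).
Proof.
move=> hk hr hp hx cx hm hdis.
have hpx := (mem_top_push hr hp hx).1 cx.
have htp' := push_toppos hr hp hw hn.
have [rk|rk] := leqP r k.
  exfalso; have hle : n - k <= n - r by exact: leq_sub2l.
  case: hdis => hd; apply: hd.
    by rewrite htp'; apply: agree_le hpx; apply: leq_trans (leqnSn _).
  move=> i hi; have ne : (i == n - r) = false by apply/eqP => ei; move: hi; rewrite ei ltnNge hle.
  rewrite nth_decr ne hpx ?(leq_trans hi (leq_trans hle (leqnSn _))) // nth_incr_nth.
  by rewrite eq_sym ne.
have hxpos : 0 < nth 0 x (n - r) by apply: (coord_gt0 hw' hx); case/andP: hk => ? ?; case/andP: hr => ? ?; lia.
have hlt : (n - r).+1 <= n - k by case/andP: hk => ? ?; case/andP: hr => ? ?; lia.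
move=> y hy hyx.
have hyt : agree (n - r).+1 y (toppos n s).
  move=> i hi; rewrite hyx ?(leq_trans hi hlt) // nth_decr.
  case: (eqVneq i (n - r)) => [->|ne].
    by rewrite hpx // nth_incr_nth eqxx add1n.
  rewrite hpx // nth_incr_nth (_ : (n - r == i) = false) //.
  by apply/eqP => ei; move/eqP: ne; rewrite ei.
have hy' := @push_pos_copy n G r g c.2 c'.2 hr hp hw hn y hy hyt.
have hyx' : agree (n - k) (incr_nth y (n - r)) x.
  move=> i hi; rewrite nth_incr_nth hyx // nth_decr.
  by case: (eqVneq i (n - r)) => [->|ne]; rewrite ?add1n ?prednK.
have := hm _ hy' hyx'.
have hne : (n - r == n - k) = false by apply/eqP => e; move: hlt; rewrite e ltnn.
by rewrite nth_incr_nth hne nth_decr eq_sym hne.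
Qed.

Lemma step_back_maximal k x : 1 <= k <= n -> x \in pos s' -> maximal_at k s' x ->
  (~ agree (n - k) x (toppos n s') \/ ~ agree (n - k) (sb x) (toppos n s)) -> maximal_at k s (sb x).
Proof.
move=> hk hx hm.
case: (succ_view hs) => [[e h]|[r [hr hp h]]|[r [g [hr hp h]]]]; rewrite !h.
- by move=> _; rewrite -e.
- exact: maximal_back_pop hk hr hp hx hm.
case: ifP => cx hdis; first exact: maximal_back_push hk hr hp hx cx hm hdis.
by move=> y hy hyx; apply: hm => //; apply: (@push_pos_sub n G r g c.2 c'.2 hr hp y hy).
Qed.

Lemma step_back_toppos k : 1 <= k <= n ->
  [\/ agree (n - k).+1 (sb (toppos n s')) (toppos n s),
      below n k (sb (toppos n s')) (toppos n s)
    | ~ agree (n - k) (sb (toppos n s')) (toppos n s)].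
Proof.
move=> hk.
case: (succ_view hs) => [[e h]|[r [hr hp h]]|[r [g [hr hp h]]]]; rewrite !h.
- by constructor 1; rewrite e.
- have [hc1 hc2] := pop_toppos hr hp hw hn hw' hn'.
  case: (ltngtP r k) => rk.
  + constructor 1; apply: agree_le hc1.
    by case/andP: hk => ? ?; case/andP: hr => ? ?; lia.
  + constructor 3 => hP.
    have e : nth 0 (toppos n s') (n - r) = nth 0 (toppos n s) (n - r).
      by apply: hP; case/andP: hk => ? ?; case/andP: hr => ? ?; lia.
    move: hc2; rewrite e; lia.
  + by subst r; constructor 2.
have htp' := push_toppos hr hp hw hn.
have hin : toppos n s' \in pos (top n (r - 1) s').
  apply/(mem_top_push hr hp (toppos_pos hw' hn')); by rewrite htp'.
rewrite hin htp' decr_incr; first by constructor 1.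
rewrite (size_of_pos hw (toppos_pos hw hn)).
by case/andP: hr => ? ?; lia.
Qed.

End OneStep.
End Steps.

(* Histories along a run R and the characterization of k-upper subruns. *)
Section Trace.
Variables (n : nat) (G Q A : Type) (delta : Q -> G -> trans Q A G).
Local Notation config := (config G Q).

Lemma histrev_rcons (L : seq config) (a b : config) x :
  histrev n delta (rcons (rcons L b) a) x = step_back n delta a b (histrev n delta (rcons L b) x).
Proof.
elim: L x => [|u L IH] x //.
case: L IH => [|v L] IH //=.
by rewrite -IH.
Qed.

Lemma hist0_cons (a b : config) l x :
  hist0 n delta (a :: b :: l) x = step_back n delta a b (hist0 n delta (b :: l) x).
Proof. by rewrite /hist0 !rev_cons histrev_rcons. Qed.

Variables (R : seq config) (c0 : config).
Hypothesis hwf : forall i, i < size R -> wfk n n (nth c0 R i).2 /\ nonempty (nth c0 R i).2.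
Hypothesis hsucc : forall i, i.+1 < size R -> succ n delta (nth c0 R i) (nth c0 R i.+1).
Local Notation S i := (nth c0 R i).2.

Fixpoint hist_from i d x := match d with
  | 0 => x
  | d'.+1 => step_back n delta (nth c0 R i) (nth c0 R i.+1) (hist_from i.+1 d' x) end.

Lemma hist_from_add i a b x : hist_from i (a + b) x = hist_from i a (hist_from (i + a) b x).
Proof. elim: a i => [|a IH] i /=; first by rewrite addn0. by rewrite IH addSnnS. Qed.

Lemma wf_conf i : i < size R -> wfk n n (S i). Proof. by move/hwf => []. Qed.
Lemma ne_conf i : i < size R -> nonempty (S i). Proof. by move/hwf => []. Qed.

Lemma hist_from_pos i d x : i + d < size R -> x \in pos (S (i + d)) -> hist_from i d x \in pos (S i).
Proof.
elim: d i => [|d IH] i /=; first by rewrite addn0.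
move=> hid hx.
have h1 : i.+1 < size R by apply: leq_ltn_trans hid; rewrite addnS ltnS leq_addr.
have hi : i < size R by apply: ltnW.
apply: (step_back_pos (hsucc h1) (wf_conf hi) (ne_conf hi) (wf_conf h1) (ne_conf h1)).
by apply: IH; rewrite addSnnS.
Qed.

Lemma hist_from_agree l i d x y : l <= n -> i + d < size R -> x \in pos (S (i + d)) -> y \in pos (S (i + d)) ->
  agree l x y -> agree l (hist_from i d x) (hist_from i d y).
Proof.
move=> hl; elim: d i => [|d IH] i /=; first by [].
move=> hid hx hy hxy.
have h1 : i.+1 < size R by apply: leq_ltn_trans hid; rewrite addnS ltnS leq_addr.
rewrite -addSnnS in hx hy hid.
have hi : i < size R by apply: ltnW.
apply: (step_back_agree (hsucc h1) (wf_conf hi) (ne_conf hi) (wf_conf h1) (ne_conf h1)) => //.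
- exact: hist_from_pos.
- exact: hist_from_pos.
- exact: IH.
Qed.

Lemma hist_from_within_one k i d x y : 1 <= k <= n -> i + d < size R -> x \in pos (S (i + d)) -> y \in pos (S (i + d)) ->
  within_one n k x y -> within_one n k (hist_from i d x) (hist_from i d y).
Proof.
move=> hk; elim: d i => [|d IH] i /=; first by [].
move=> hid hx hy hxy.
have h1 : i.+1 < size R by apply: leq_ltn_trans hid; rewrite addnS ltnS leq_addr.
rewrite -addSnnS in hx hy hid.
have hi : i < size R by apply: ltnW.
apply: (step_back_within_one (hsucc h1) (wf_conf hi) (ne_conf hi) (wf_conf h1) (ne_conf h1)) => //.
- exact: hist_from_pos.
- exact: hist_from_pos.
- exact: IH.
Qed.

Lemma hist0_from i d x : i + d < size R -> hist0 n delta (take d.+1 (drop i R)) x = hist_from i d x.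
Proof.
elim: d i => [|d IH] i hid.
  have hi : i < size R by rewrite addn0 in hid.
  by rewrite (drop_nth c0 hi) /= take0.
have hi : i < size R by apply: leq_ltn_trans hid; apply: leq_addr.
have hi1 : i.+1 < size R by apply: leq_ltn_trans hid; rewrite addnS ltnS leq_addr.
have E : take d.+2 (drop i R) = nth c0 R i :: take d.+1 (drop i.+1 R) by rewrite (drop_nth c0 hi).
have E1 : take d.+1 (drop i.+1 R) = nth c0 R i.+1 :: take d (drop i.+2 R) by rewrite (drop_nth c0 hi1).
rewrite E E1 hist0_cons -E1 IH //.
by rewrite addSnnS.
Qed.

Lemma last_sub i e : i <= e < size R ->
  last (nth c0 R i) (take (e - i) (drop i.+1 R)) = nth c0 R e.
Proof.
case/andP=> hie heR.
rewrite (last_nth c0) size_takel; last by rewrite size_drop; lia.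
have [d ->] : exists d, e = i + d by exists (e - i); rewrite subnKC.
rewrite addKn; case: d {hie heR} => [|d] /=; first by rewrite addn0.
by rewrite nth_take // nth_drop addSnnS.
Qed.

Lemma upper_sub k i e : i <= e < size R ->
  (upper n delta k (subrun R i e) <->
   (List.In (top n k (S i)) (subd (n - k) (S i)) /\
    forall x, x \in pos (top n k (S e)) -> hist_from i (e - i) x \in pos (top n k (S i)))).
Proof.
case/andP=> hie heR.
have hi : i < size R by apply: leq_ltn_trans heR.
have E : subrun R i e = nth c0 R i :: take (e - i) (drop i.+1 R).
  by rewrite /subrun (drop_nth c0 hi).
rewrite E /= last_sub ?hie //.
split=> -[h1 h2]; split=> // x hx.
  by rewrite -hist0_from ?subnKC // -[take _ (drop i R)]/(subrun R i e) E; apply: h2.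
by move: (h2 x hx); rewrite -hist0_from ?subnKC // -[take _ (drop i R)]/(subrun R i e) E.
Qed.

Lemma upper_iff k i e : k <= n -> i <= e < size R ->
  (upper n delta k (subrun R i e) <->
   agree (n - k) (hist_from i (e - i) (toppos n (S e))) (toppos n (S i))).
Proof.
move=> hk hie; rewrite (upper_sub k hie).
case/andP: hie => hie heR.
have hi : i < size R by apply: leq_ltn_trans heR.
have hw := wf_conf hi; have hn := ne_conf hi; have hwe := wf_conf heR; have hne := ne_conf heR.
have eie : i + (e - i) = e by rewrite subnKC.
split=> [[_ h]|h].
  have ht : toppos n (S e) \in pos (top n k (S e)).
    apply/(top_mem _ hk hwe hne); split; [exact: toppos_pos | by []].
  by have [] := (top_mem _ hk hw hn).1 (h _ ht).
split; first by apply: (In_topd (leq_subr k n) hw hn).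
move=> x /(top_mem _ hk hwe hne) [hx hpx].
apply/(top_mem _ hk hw hn); split.
  by apply: hist_from_pos; rewrite eie.
apply: agree_trans h; apply: hist_from_agree; rewrite ?eie ?leq_subr //.
exact: toppos_pos.
Qed.

Lemma upper_compose r i j e : r <= n -> i <= j -> j <= e < size R ->
  upper n delta r (subrun R i j) -> upper n delta r (subrun R j e) ->
  upper n delta r (subrun R i e).
Proof.
move=> hr hij /andP [hje heR].
have hjR : j < size R by apply: leq_ltn_trans heR.
have hiR : i < size R by apply: leq_ltn_trans hjR.
rewrite !upper_iff ?hij ?hje ?(leq_trans hij hje) // => hij_up hje_up.
have -> : e - i = (j - i) + (e - j) by lia.
rewrite hist_from_add subnKC //.
apply: agree_trans hij_up; apply: hist_from_agree; rewrite ?subnKC ?leq_subr //.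
- apply: hist_from_pos; rewrite subnKC //; exact: toppos_pos (wf_conf heR) (ne_conf heR).
- exact: toppos_pos (wf_conf hjR) (ne_conf hjR).
Qed.

Section Return.
Variables (k m : nat).
Hypothesis hk : 1 <= k <= n.
Hypothesis hsizeR : size R = m.+1.

Let hkn : k <= n. Proof. by case/andP: hk. Qed.
Let hk1n : k - 1 <= n. Proof. exact: leq_trans (leq_subr 1 k) hkn. Qed.
Let lt_size i : i <= m -> i < size R. Proof. by rewrite hsizeR ltnS. Qed.
Let wf_i i : i <= m -> wfk n n (S i). Proof. by move/lt_size/wf_conf. Qed.
Let ne_i i : i <= m -> nonempty (S i). Proof. by move/lt_size/ne_conf. Qed.
Let hnk : (n - k).+1 <= n. Proof. by case/andP: hk => ? ?; lia. Qed.
Let toppos_i i : i <= m -> toppos n (S i) \in pos (S i).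
Proof. by move=> hi; apply: toppos_pos (wf_i hi) (ne_i hi). Qed.

Definition hist_top i := hist_from i (m - i) (toppos n (S m)).

Lemma hist_top_split i e : i <= e <= m -> hist_top i = hist_from i (e - i) (hist_top e).
Proof.
move=> /andP [hie hem]; rewrite /hist_top.
have -> : m - i = (e - i) + (m - e) by lia.
by rewrite hist_from_add subnKC.
Qed.

Lemma hist_top_pos i : i <= m -> hist_top i \in pos (S i).
Proof. by move=> hi; apply: hist_from_pos; rewrite subnKC ?lt_size ?toppos_i. Qed.

Lemma hist_top_last : hist_top m = toppos n (S m).
Proof. by rewrite /hist_top subnn. Qed.

Lemma hist_top_step i : i < m ->
  hist_top i = step_back n delta (nth c0 R i) (nth c0 R i.+1) (hist_top i.+1).
Proof. by move=> hi; rewrite (hist_top_split (e := i.+1)) ?subSnn ?leqnSn. Qed.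

Lemma upper_suffix r i : r <= n -> i <= m ->
  upper n delta r (subrun R i m) <-> agree (n - r) (hist_top i) (toppos n (S i)).
Proof. by move=> hr hi; apply: upper_iff; rewrite // hi lt_size. Qed.

Lemma upper_suffix_pred i : i <= m ->
  upper n delta (k - 1) (subrun R i m) <-> agree (n - k).+1 (hist_top i) (toppos n (S i)).
Proof. by move=> hi; rewrite -subnB1 //; apply: upper_suffix. Qed.

Lemma maximal_hist_top j : j.+1 < m ->
  (forall i, j < i < m -> ~ upper n delta k (subrun R i m)) ->
  forall t, t <= m - j -> maximal_at n k (S (m - t)) (hist_top (m - t)).
Proof.
move=> hjm hout; elim=> [|t IH] ht.
  by rewrite subn0 hist_top_last => y hy hpy; apply: top_max hk (wf_i (leqnn m)) (ne_i (leqnn m)) hy hpy.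
have hlt : m - t.+1 < m by lia.
have e1 : (m - t.+1).+1 = m - t by lia.
have not_upper i : j < i < m -> ~ agree (n - k) (hist_top i) (toppos n (S i)).
  by move=> hi; rewrite -upper_suffix //; [apply: hout | case/andP: hi => _ /ltnW].
rewrite hist_top_step //.
apply: (step_back_maximal (hsucc (lt_size hlt)) (wf_i (ltnW hlt)) (ne_i (ltnW hlt)) (wf_i hlt) (ne_i hlt)) => //.
- exact: hist_top_pos.
- by rewrite e1; apply: IH; lia.
rewrite -hist_top_step //.
case: (ltnP j (m - t.+1)) => hji; first by right; apply: not_upper; lia.
by left; rewrite e1; apply: not_upper; lia.
Qed.

Lemma greatest_upper_sharpen j : j.+1 < m -> upper n delta k (subrun R j m) ->
  (forall i, j < i < m -> ~ upper n delta k (subrun R i m)) ->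
  upper n delta (k - 1) (subrun R j m).
Proof.
move=> hjm hup hout; have hj : j <= m by apply: ltnW; apply: ltnW.
have hagree := (upper_suffix hkn hj).1 hup.
have hmax := maximal_hist_top hjm hout (leqnn _); rewrite subKn // in hmax.
apply/upper_suffix_pred/agreeS => //; split => //.
apply/eqP; rewrite eqn_leq; apply/andP; split.
- exact: top_max hk (wf_i hj) (ne_i hj) (hist_top_pos hj) hagree.
- exact: hmax (toppos_i hj) (agree_sym hagree).
Qed.

Lemma last_step_below j : j.+1 = m -> upper n delta k (subrun R j m) ->
  ~ upper n delta (k - 1) (subrun R j m) -> below n k (hist_top j) (toppos n (S j)).
Proof.
move=> hjm hup hnot; have hj : j <= m by rewrite -hjm.
have hs : j.+1 < size R by rewrite hsizeR hjm.
have hm : j.+1 <= m by rewrite hjm.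
have ex : hist_top j = step_back n delta (nth c0 R j) (nth c0 R j.+1) (toppos n (S j.+1)).
  by rewrite hist_top_step -?hjm // hjm hist_top_last.
have := step_back_toppos (hsucc hs) (wf_i hj) (ne_i hj) (wf_i hm) (ne_i hm) hk.
rewrite -ex.
case=> [h|//|h]; first by case: hnot; apply/upper_suffix_pred.
by case: h; apply/upper_suffix.
Qed.

Lemma upper_prefix j : j <= m -> upper n delta (k - 1) (subrun R 0 j) ->
  agree (n - k).+1 (hist_from 0 j (toppos n (S j))) (toppos n (S 0)).
Proof. by move=> hj; rewrite upper_iff ?lt_size // subn0 subnB1. Qed.

(* Tracing back from R(j): the history of the top of R(m) stays directly below the history
   of the top of R(j); otherwise R itself would be (k-1)-upper. *)
Lemma below_trace j : j.+1 = m -> below n k (hist_top j) (toppos n (S j)) ->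
  upper n delta (k - 1) (subrun R 0 j) -> ~ upper n delta (k - 1) (subrun R 0 m) ->
  forall i, i <= j -> below n k (hist_top i) (hist_from i (j - i) (toppos n (S j))).
Proof.
move=> hjm [hag hnth] hup0 hnot i hij.
have hj : j <= m by rewrite -hjm.
have hi : i <= m := leq_trans hij hj.
have hjR := lt_size hj.
have hone : within_one n k (hist_top i) (hist_from i (j - i) (toppos n (S j))).
  rewrite (hist_top_split (e := j)) ?hij //; apply: hist_from_within_one; rewrite ?subnKC //.
  - exact: hist_top_pos.
  - exact: toppos_i.
  - by split => //; right; rewrite -hnth.
case: hone => hagi [e|//]; exfalso; apply/hnot/upper_suffix_pred => //.
have W0 := upper_prefix hj hup0.
have -> : hist_top 0 = hist_from 0 i (hist_top i) by rewrite (hist_top_split (e := i)) ?subn0.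
rewrite -{1}(subnKC hij) hist_from_add add0n in W0.
apply: agree_trans W0; apply: hist_from_agree; rewrite ?add0n.
- exact: hnk.
- exact: lt_size.
- exact: hist_top_pos.
- by apply: hist_from_pos; rewrite subnKC ?lt_size ?toppos_i.
- by apply/agreeS.
Qed.

Lemma below_start j : j.+1 = m -> upper n delta (k - 1) (subrun R 0 j) ->
  below n k (hist_top 0) (hist_from 0 j (toppos n (S j))) ->
  below n k (hist_top 0) (toppos n (S 0)).
Proof.
move=> hjm hup [hag hnth]; have /agreeS [W0 e] := upper_prefix (ltnW (eq_leq hjm)) hup.
by split; [apply: agree_trans hag W0 | rewrite hnth e].
Qed.

Lemma pop_condition : below n k (hist_top 0) (toppos n (S 0)) ->
  exists p, [/\ pop n k (S 0) = Some p, List.In (top n (k - 1) p) (subd (n - (k - 1)) (S 0)) &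
    forall x, x \in pos (top n (k - 1) (S m)) -> hist0 n delta R x \in pos (top n (k - 1) p)].
Proof.
move=> hb.
have [p [hpop hIn hmem]] := pop_exists hk (wf_i (leq0n m)) (ne_i (leq0n m)) (hist_top_pos (leq0n m)) hb.
exists p; split => // x hx.
have -> : hist0 n delta R x = hist_from 0 m x.
  by rewrite -hist0_from ?add0n ?lt_size // drop0 take_oversize ?hsizeR.
have [hxm hpx] := (top_mem x hk1n (wf_i (leqnn m)) (ne_i (leqnn m))).1 hx.
rewrite subnB1 // in hpx.
have /agreeS [hpH e] : agree (n - k).+1 (hist_from 0 m x) (hist_top 0).
  rewrite /hist_top subn0; apply: hist_from_agree; rewrite ?add0n ?lt_size ?toppos_i //; exact: hnk.
apply: hmem; first by apply: hist_from_pos; rewrite add0n ?lt_size.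
by case: hb => hb1 hb2; split; [apply: agree_trans hpH hb1 | rewrite e].
Qed.

(* No suffix of R is (k-1)-upper: its top history would lie both in and above top^(k-1). *)
Lemma no_upper_suffix j : j.+1 = m ->
  (forall i, i <= j -> below n k (hist_top i) (hist_from i (j - i) (toppos n (S j)))) ->
  forall i, i < m -> ~ upper n delta (k - 1) (subrun R i m).
Proof.
move=> hjm hbelow i him /(upper_suffix_pred (ltnW him)) /agreeS [hXi e].
have hij : i <= j by rewrite -ltnS hjm.
have hj : j <= m by rewrite -hjm.
have [hXW hnth] := hbelow i hij.
have hWpos : hist_from i (j - i) (toppos n (S j)) \in pos (S i).
  by apply: hist_from_pos; rewrite subnKC ?lt_size ?toppos_i.
have := top_max hk (wf_i (ltnW him)) (ne_i (ltnW him)) hWpos (agree_trans (agree_sym hXW) hXi).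
by rewrite -hnth -e ltnn.
Qed.

Lemma kreturn_of_greatest l : R = c0 :: l -> ~ upper n delta (k - 1) R ->
  (exists j, j < m /\ upper n delta k (subrun R j m)) ->
  (forall j, j < m -> upper n delta k (subrun R j m) ->
     (forall j', j < j' < m -> ~ upper n delta k (subrun R j' m)) ->
     upper n delta (k - 1) (subrun R 0 j)) ->
  kreturn n delta k R.
Proof.
move=> eR hnot [j0 [hj0 Uj0]] hgreat.
have eRm : subrun R 0 m = R by rewrite /subrun drop0 subn0 take_oversize // hsizeR.
rewrite -eRm in hnot.
have [j [hj Uj Gj]] := greatest_witness (P := fun j => upper n delta k (subrun R j m)) hj0 Uj0.
have U0j := hgreat j hj Uj Gj.
have notUj : ~ upper n delta (k - 1) (subrun R j m).
  by move=> h; apply/hnot/(upper_compose hk1n (leq0n j) _ U0j h); rewrite ltnW //= lt_size.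
have ejm : j.+1 = m.
  by apply/eqP; rewrite eqn_leq hj leqNgt; apply/negP => hjm; apply/notUj/greatest_upper_sharpen.
have hbelow := below_trace ejm (last_step_below ejm Uj notUj) U0j hnot.
have := hbelow 0 (leq0n j); rewrite subn0 => /(below_start ejm U0j) /pop_condition.
case=> p [hpop hIn hmem].
have hsl : size R - 1 = m by rewrite hsizeR subn1.
rewrite /kreturn {1}eR hsl; split; last exact: no_upper_suffix ejm hbelow.
exists p; rewrite eR /= in hpop hIn; split => //.
have hl : size l = m by move: hsizeR; rewrite eR => -[].
by rewrite {1}eR /=; split => // x; rewrite (last_nth c0) -eR hl; apply: hmem.
Qed.

End Return.
End Trace.

Lemma steps_nth n (G Q A : Type) (delta : Q -> G -> trans Q A G) (c c0 : config G Q) l :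
  steps n delta c l ->
  forall i, i.+1 < size (c :: l) -> succ n delta (nth c0 (c :: l) i) (nth c0 (c :: l) i.+1).
Proof.
elim: l c => [|c' l IH] c //= [h1 h2] [|i] hi //=.
exact: IH h2 i hi.
Qed.

Theorem mainTheorem7 (n : nat) (G Q A : finType)
  (delta : Q -> G -> trans Q A G)
  (Hinj : forall q g f, delta q g = TRead f -> injective f)
  (k : nat) (Hk : 1 <= k <= n)
  (R : seq (config G Q))
  (HR : is_run n delta R)
  (Hlen : 1 <= size R - 1)
  (Hnot : ~ upper n delta (k - 1) R)
  (Hex : exists j, j < size R - 1 /\ upper n delta k (subrun R j (size R - 1)))
  (Hgreat : forall j, j < size R - 1 ->
      upper n delta k (subrun R j (size R - 1)) ->
      (forall j', j < j' < size R - 1 -> ~ upper n delta k (subrun R j' (size R - 1))) ->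
      upper n delta (k - 1) (subrun R 0 j)) :
  kreturn n delta k R.
Proof.
case: R HR Hnot Hex Hgreat {Hlen} => [[]|c l] [hsteps hconf] Hnot Hex Hgreat.
have hm : size (c :: l) - 1 = size l by rewrite /= subn1.
rewrite hm in Hex Hgreat.
apply: (kreturn_of_greatest (c0 := c) _ _ Hk _ (erefl _) Hnot Hex Hgreat) => //.
- move=> i hi; exact: (Forall_nth (P := fun c => wfk n n c.2 /\ nonempty c.2) c hconf hi).
- exact: steps_nth.
Qed.
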